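(* There exist differentiable functions $f_1,f_2:\mathbb{R}\to\mathbb{R}$ such that $f=\frac12(f_1+f_2)$ is bounded from below and has $1$-Lipschitz derivative, and such that for the stochastic gradient $g(x)=f_i'(x)$, where $i$ is drawn uniformly at random from $\{1,2\}$ (so $\mathbb{E}[g(x)]=f'(x)$), there are no constants $\alpha,\beta\ge 0$ with $\mathbb{E}|g(x)|^2\le \alpha |f'(x)|^2+\beta$ for all $x\in\mathbb{R}$.
   Context: The inequality $\mathbb{E}|g(x)|^2\le\alpha|f'(x)|^2+\beta$ for all $x$ is called the relaxed growth condition. *)

From Stdlib Require Import Reals.
From Coquelicot Require Import Coquelicot.
Open Scope R_scope.

Definition avg2 (f1 f2 : R -> R) : R -> R := fun x => (f1 x + f2 x) / 2.

(* Stochastic gradient g(x) = f_i'(x), i uniform on {1,2}: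
   E|g(x)|^2 = (|f1'(x)|^2 + |f2'(x)|^2) / 2. *)
Definition E_sq_stoch_grad (f1 f2 : R -> R) (x : R) : R :=
  (Rabs (Derive f1 x) ^ 2 + Rabs (Derive f2 x) ^ 2) / 2.

Definition E_stoch_grad (f1 f2 : R -> R) (x : R) : R :=
  (Derive f1 x + Derive f2 x) / 2.

(* Take f1 = x^2 and f2 = -x^2. Their average f is identically 0, so it is
   bounded below and f' = 0 is trivially Lipschitz; but then the relaxed
   growth condition would force E|g(x)|^2 = |2x|^2 <= beta for every x. *)
From Stdlib Require Import Reals Lra Psatz.
From Coquelicot Require Import Coquelicot.
Open Scope R_scope.

Lemma E_stoch_grad_Derive_avg2 (f1 f2 : R -> R) (x : R) :
  ex_derive f1 x -> ex_derive f2 x ->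
  E_stoch_grad f1 f2 x = Derive (avg2 f1 f2) x.
Proof.
  intros H1 H2; unfold avg2, E_stoch_grad, Rdiv.
  rewrite Derive_scal_l, Derive_plus by assumption.
  field.
Qed.

Lemma avg2_opp (f : R -> R) (x : R) : avg2 f (fun y => - f y) x = 0.
Proof. unfold avg2; field. Qed.

Lemma Derive_avg2_opp (f : R -> R) (x : R) :
  Derive (avg2 f (fun y => - f y)) x = 0.
Proof.
  rewrite (Derive_ext _ (fun _ => 0)) by apply avg2_opp.
  apply Derive_const.
Qed.

Lemma E_sq_stoch_grad_opp (f : R -> R) (x : R) :
  E_sq_stoch_grad f (fun y => - f y) x = Derive f x ^ 2.
Proof.
  unfold E_sq_stoch_grad; rewrite Derive_opp, !pow2_abs.
  field.
Qed.

Lemma Derive_sqr (x : R) : Derive (fun y => y ^ 2) x = 2 * x.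
Proof. apply is_derive_unique; auto_derive; [easy | ring]. Qed.

Theorem proposition1 :
  exists f1 f2 : R -> R,
    (forall x, ex_derive f1 x) /\ (forall x, ex_derive f2 x) /\
    (exists m : R, forall x, m <= avg2 f1 f2 x) /\
    (forall x y, Rabs (Derive (avg2 f1 f2) x - Derive (avg2 f1 f2) y) <= Rabs (x - y)) /\
    (forall x, E_stoch_grad f1 f2 x = Derive (avg2 f1 f2) x) /\
    ~ (exists alpha beta : R, 0 <= alpha /\ 0 <= beta /\
         forall x, E_sq_stoch_grad f1 f2 x <= alpha * Rabs (Derive (avg2 f1 f2) x) ^ 2 + beta).
Proof.
  assert (Hsqr : forall x, ex_derive (fun y => y ^ 2) x) by (intro; auto_derive; easy).
  assert (Hopp : forall x, ex_derive (fun y => - y ^ 2) x) by (intro; auto_derive; easy).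
  exists (fun y => y ^ 2), (fun y => - y ^ 2).
  repeat split; auto.
  - exists 0; intro x; rewrite avg2_opp; lra.
  - intros x y; rewrite !Derive_avg2_opp, Rminus_0_r, Rabs_R0; apply Rabs_pos.
  - intro x; apply E_stoch_grad_Derive_avg2; auto.
  - intros [alpha [beta [_ [Hbeta Hgrowth]]]].
    specialize (Hgrowth (beta + 1)).
    rewrite E_sq_stoch_grad_opp, Derive_avg2_opp, Derive_sqr, Rabs_R0 in Hgrowth.
    nra.
Qed.
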